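(* Let $\sigma: \Omega \to \Delta(A)$ be a canonical experiment. Then $\tau^{*} \in BR(\sigma)$ if and only if there exists $p \in P_r^{*}(\sigma)$ such that for all $a, b \in A$, $$\sum_{\omega \in \Omega} p(\omega)\sigma(a\mid\omega)\,[u_r(b,\omega) - u_r(a,\omega)] \le 0.$$
   Context: Setting: $\Omega$ is a finite set of states, $A$ a finite set of receiver actions, $u_r: A \times \Omega \to \mathbb{R}$ the receiver's payoff. $P \subseteq \Delta(\Omega)$ is a nonempty closed convex set of priors; the receiver has maxmin expected utility preferences. A canonical experiment is $\sigma: \Omega \to \Delta(A)$; a receiver strategy is $\tau: A \to \Delta(A)$. $u_r(p,\sigma,\tau) = \sum_{\omega,m,a} p(\omega)\sigma(m\mid\omega)\tau(a\mid m)u_r(a,\omega)$, $u_r(\sigma,\tau) = \min_{p \in P} u_r(p,\sigma,\tau)$, and $BR(\sigma) = \arg\max_{\tau} u_r(\sigma,\tau)$ over all $\tau: A \to \Delta(A)$. The obedient strategy $\tau^{*}$ is $\tau^{*}(a\mid a) = 1$ for all $a$. $P_r^{*}(\sigma) = \arg\min_{p \in P} u_r(p,\sigma,\tau^{*})$ is the set of worst-case priors under obedience. *)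

From mathcomp Require Import all_boot all_order all_algebra.
From mathcomp Require Import boolp classical_sets reals.
Set Implicit Arguments. Unset Strict Implicit. Unset Printing Implicit Defensive.
Import Order.TTheory GRing.Theory Num.Theory.
Local Open Scope ring_scope.
Local Open Scope classical_set_scope.

Section Defs.
Variable R : realType.

Definition is_dist (X : finType) (q : X -> R) : Prop :=
  (forall x, 0 <= q x) /\ \sum_(x : X) q x = 1.

(* a (canonical) experiment sigma : Omega -> Delta(A), sigma w m = sigma(m | w) *)
Definition is_experiment (Omega A : finType) (sigma : Omega -> A -> R) : Prop :=
  forall w, is_dist (sigma w).

(* a receiver strategy tau : A -> Delta(A), tau m a = tau(a | m) *)
Definition is_strategy (A : finType) (tau : A -> A -> R) : Prop :=
  forall m, is_dist (tau m).

Definition obedient (A : finType) : A -> A -> R :=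
  fun m a => if m == a then 1 else 0.

Definition ur_p (Omega A : finType) (u : A -> Omega -> R) (p : Omega -> R)
  (sigma : Omega -> A -> R) (tau : A -> A -> R) : R :=
  \sum_(w : Omega) \sum_(m : A) \sum_(a : A) p w * sigma w m * tau m a * u a w.

(* u_r(sigma, tau) = min_{p in P} u_r(p, sigma, tau)
   (the minimum exists since P is compact; it equals the infimum) *)
Definition ur (Omega A : finType) (u : A -> Omega -> R) (P : set (Omega -> R))
  (sigma : Omega -> A -> R) (tau : A -> A -> R) : R :=
  inf [set ur_p u p sigma tau | p in P].

Definition in_BR (Omega A : finType) (u : A -> Omega -> R) (P : set (Omega -> R))
  (sigma : Omega -> A -> R) (tau : A -> A -> R) : Prop :=
  is_strategy tau /\
  forall tau', is_strategy tau' -> ur u P sigma tau' <= ur u P sigma tau.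

Definition Pstar (Omega A : finType) (u : A -> Omega -> R) (P : set (Omega -> R))
  (sigma : Omega -> A -> R) : set (Omega -> R) :=
  [set p | P p /\ forall q, P q ->
     ur_p u p sigma (@obedient A) <= ur_p u q sigma (@obedient A)].

Definition priors_subset (Omega : finType) (P : set (Omega -> R)) : Prop :=
  forall p, P p -> is_dist p.

Definition convex_set (Omega : finType) (P : set (Omega -> R)) : Prop :=
  forall p q (t : R), P p -> P q -> 0 <= t <= 1 ->
    P (fun w => t * p w + (1 - t) * q w).

(* closedness in R^Omega (finite-dimensional, so sequential closedness
   w.r.t. coordinatewise convergence is closedness) *)
Definition closed_set (Omega : finType) (P : set (Omega -> R)) : Prop :=
  forall (s : nat -> Omega -> R) (p : Omega -> R),
    (forall n, P (s n)) ->
    (forall eps : R, 0 < eps -> exists N : nat, forall n, (N <= n)%N ->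
        forall w, `|s n w - p w| < eps) ->
    P p.

End Defs.

(* If a worst-case prior p of the obedient strategy makes every deviation
   unprofitable, then against p obedience beats every strategy, and since p is
   worst case for obedience no strategy has a higher maxmin payoff.

   Conversely, let Q be the compact convex set of worst-case priors for
   obedience and minimise over Q the squared distance from the vector of
   deviation gains to the nonpositive orthant. If the minimum is positive, its
   first-order condition yields weights mu on deviations whose weighted gain is
   at least some c > 0 on all of Q. Playing those deviations with probability
   eps changes the payoff under p by eps times that weighted gain, so if
   obedience is a best response there are priors p_eps with
   L p_eps + eps G p_eps <= V + eps^2 (L: obedient payoff, V: its minimum,
   G: weighted gain). Any limit point of the p_eps as eps -> 0 lies in Q and
   has G <= 0, a contradiction. *)

From mathcomp Require Import all_boot all_order all_algebra.
From mathcomp Require Import boolp classical_sets reals.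
From mathcomp Require Import topology normedtype sequences.
From mathcomp Require Import ring lra.
Import Order.TTheory GRing.Theory Num.Theory numFieldNormedType.Exports.
Local Open Scope ring_scope.
Local Open Scope classical_set_scope.
Set Implicit Arguments.
Unset Strict Implicit.
Unset Printing Implicit Defensive.

Section Distributions.
Variables (R : realType) (Omega : finType).
Implicit Types (p q : Omega -> R) (c : Omega -> R) (s : nat -> Omega -> R).

Definition cvg_unif s p := forall eps : R, 0 < eps ->
  exists N : nat, forall n, (N <= n)%N -> forall w, `|s n w - p w| < eps.

Lemma dist_bound p w : is_dist p -> 0 <= p w <= 1.
Proof.
move=> [p_ge0 p_sum1]; rewrite p_ge0 -p_sum1.
by rewrite (bigD1 w) //= lerDl sumr_ge0.
Qed.

Definition expect c p : R := \sum_w p w * c w.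

Lemma expect_conv c p q t :
  expect c (fun w => t * p w + (1 - t) * q w) = t * expect c p + (1 - t) * expect c q.
Proof. by rewrite /expect !mulr_sumr -big_split; apply: eq_bigr => w _ /=; ring. Qed.

Lemma expect_dist_norm c p : is_dist p -> `|expect c p| <= \sum_w `|c w|.
Proof.
move=> dp; apply: le_trans (ler_norm_sum _ _ _) _; apply: ler_sum => w _.
have /andP[p0 p1] := dist_bound w dp.
by rewrite normrM (ger0_norm p0) ler_piMl.
Qed.

Lemma expectD c1 c2 p : expect c1 p + expect c2 p = expect (fun w => c1 w + c2 w) p.
Proof. by rewrite /expect -big_split; apply: eq_bigr => w _; rewrite mulrDr. Qed.

Lemma expectZ (k : R) c p : k * expect c p = expect (fun w => k * c w) p.
Proof. by rewrite /expect mulr_sumr; apply: eq_bigr => w _; rewrite mulrCA. Qed.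

Lemma expect_sum (I : finType) (F : I -> Omega -> R) p :
  \sum_i expect (F i) p = expect (fun w => \sum_i F i w) p.
Proof.
rewrite /expect exchange_big; apply: eq_bigr => w _ /=.
by rewrite mulr_sumr.
Qed.

Definition lipschitz_dist (f : (Omega -> R) -> R) (C : R) := forall p q e,
  is_dist p -> is_dist q -> (forall w, `|p w - q w| < e) -> `|f p - f q| <= C * e.

Lemma expect_lipschitz c : lipschitz_dist (expect c) (\sum_w `|c w|).
Proof.
move=> p q e _ _ pq_e; rewrite /expect -sumrB mulr_suml.
apply: le_trans (ler_norm_sum _ _ _) _; apply: ler_sum => w _.
by rewrite -mulrBl normrM mulrC ler_wpM2l // ltW.
Qed.

Lemma lipschitz_cvg f C s p : lipschitz_dist f C ->
  (forall n, is_dist (s n)) -> is_dist p -> cvg_unif s p ->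
  f (s n) @[n --> \oo] --> f p.
Proof.
move=> f_lip ds dp s_p; apply/cvgrPdist_lt => eps eps0.
have C1 : 0 < `|C| + 1 by rewrite ltr_wpDl.
have [N sN_p] := s_p (eps / (`|C| + 1)) (divr_gt0 eps0 C1).
near=> n; apply: le_lt_trans (f_lip _ _ _ dp (ds n) _) _.
  by move=> w; rewrite distrC; apply: sN_p; near: n; exists N.
rewrite -[ltRHS](divfK (lt0r_neq0 C1)) [ltRHS]mulrC.
by rewrite ltr_pM2r ?divr_gt0 // (le_lt_trans (ler_norm C)) // ltrDl.
Unshelve. all: by end_near.
Qed.

Lemma cvg_le_harmonic (x : R ^nat) l B K :
  x @ \oo --> l -> (forall n, x n <= B + K * harmonic n) -> l <= B.
Proof.
move=> x_l x_le; have B_K : (fun n => B + K * harmonic n) @ \oo --> B + K * 0.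
  by apply: cvgD; [exact: cvg_cst | apply: cvgMr; exact: cvg_harmonic].
rewrite mulr0 addr0 in B_K; apply: (ler_cvg_to x_l B_K); exact: nearW.
Qed.

Lemma increasing_seq_geq (phi : nat -> nat) n : increasing_seq phi -> (n <= phi n)%N.
Proof.
move=> phi_inc; elim: n => // n IHn.
apply: leq_ltn_trans IHn _; have := phi_inc n.+1 n.
by rewrite !leEnat ltnn ltnNge => ->.
Qed.

Lemma harmonic_le1 n : harmonic n <= 1 :> R.
Proof. by rewrite /= invf_le1 ?ler1n. Qed.

Lemma harmonic_subseq_le (phi : nat -> nat) n :
  increasing_seq phi -> harmonic (phi n) <= harmonic n :> R.
Proof.
by move=> /(increasing_seq_geq n) le_n; rewrite /= lef_pV2 ?posrE // ler_nat.
Qed.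

Lemma bounded_subseq_cvg_unif s (M : R) : (forall n w, `|s n w| <= M) ->
  exists2 phi : nat -> nat, increasing_seq phi &
    exists p, cvg_unif (fun n => s (phi n)) p.
Proof.
move=> s_le.
have : exists2 phi : nat -> nat, increasing_seq phi &
    forall w, cvgn (fun n => s (phi n) w).
  suff [phi phi_inc cvg_phi] : exists2 phi : nat -> nat, increasing_seq phi &
      forall w, w \in enum Omega -> cvgn (fun n => s (phi n) w).
    by exists phi => // w; apply: cvg_phi; rewrite mem_enum.
  elim: (enum Omega) => [|w l [phi phi_inc cvg_phi]]; first by exists id.
  have bnd : bounded_fun (fun n => s (phi n) w).
    exists M; split=> [|M' M_M' n _]; first exact: num_real.
    exact/ltW/(le_lt_trans (s_le _ _)).
  have [psi psi_inc cvg_psi] := bolzano_weierstrass bnd.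
  exists (phi \o psi) => [m n /=|w']; first by rewrite !(phi_inc, psi_inc).
  rewrite inE => /predU1P[->|/cvg_phi]; first exact: cvg_psi.
  move=> /cvg_ex[x /cvgrPdist_lt x_lim]; apply/cvg_ex; exists x.
  apply/cvgrPdist_lt => eps eps0; have [N _ N_le] := x_lim eps eps0.
  exists N => // n /= Nn; apply: N_le; apply: leq_trans Nn _.
  exact: increasing_seq_geq.
move=> [phi phi_inc cvg_phi]; exists phi => //.
exists (fun w => limn (fun n => s (phi n) w)) => eps eps0.
have /choice[N N_le] : forall w, exists N : nat, forall n, (N <= n)%N ->
    `|s (phi n) w - limn (fun n => s (phi n) w)| < eps.
  move=> w; have /cvgrPdist_lt/(_ eps eps0)[N _ N_le] := cvg_phi w.
  by exists N => n Nn; rewrite distrC; apply: N_le.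
exists (\max_w N w)%N => n le_n w; apply: N_le.
by apply: leq_trans le_n; apply: leq_bigmax.
Qed.

Lemma closed_dist_subseq (Y : set (Omega -> R)) s :
  (forall p, Y p -> is_dist p) -> closed_set Y -> (forall n, Y (s n)) ->
  exists2 phi : nat -> nat, increasing_seq phi &
    exists2 p, Y p & cvg_unif (fun n => s (phi n)) p.
Proof.
move=> Y_dist Y_closed Y_s.
have s_le n w : `|s n w| <= 1.
  by have /andP[s0 s1] := dist_bound w (Y_dist _ (Y_s n)); rewrite ger0_norm.
have [phi phi_inc [p s_p]] := bounded_subseq_cvg_unif s_le.
by exists phi => //; exists p => //; apply: Y_closed s_p.
Qed.

Lemma lipschitz_min_attained (Y : set (Omega -> R)) f C :
  Y !=set0 -> (forall p, Y p -> is_dist p) -> closed_set Y -> lipschitz_dist f C ->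
  exists2 p0, Y p0 & forall q, Y q -> f p0 <= f q.
Proof.
move=> [y0 Y_y0] Y_dist Y_closed f_lip.
have f_lb q : Y q -> f y0 - C * 2 <= f q.
  move=> Y_q; have y0_q w : `|y0 w - q w| < 2.
    have /andP[? ?] := dist_bound w (Y_dist _ Y_y0).
    have /andP[? ?] := dist_bound w (Y_dist _ Y_q).
    by rewrite ltr_norml; apply/andP; split; lra.
  have /ler_normlP[_] := f_lip _ _ _ (Y_dist _ Y_y0) (Y_dist _ Y_q) y0_q; lra.
have f_inf : has_inf (f @` Y).
  by split; [exists (f y0), y0 | exists (f y0 - C * 2) => _ [q Y_q <-]; apply: f_lb].
set m := inf (f @` Y).
have /choice[y y_min] n : exists y, Y y /\ f y < m + harmonic n.
  by have [_ [y Y_y <-] y_lt] := inf_adherent (harmonic_gt0 n) f_inf; exists y.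
have [phi phi_inc [p0 Y_p0 y_p0]] :=
  closed_dist_subseq Y_dist Y_closed (fun n => (y_min n).1).
exists p0 => // q Y_q; apply: (@le_trans _ _ m); last by apply: (ge_inf f_inf.2); exists q.
apply: (cvg_le_harmonic (K := 1)).
  by apply: lipschitz_cvg f_lip _ (Y_dist _ Y_p0) y_p0 => n; apply: Y_dist (y_min _).1.
move=> n; rewrite mul1r; apply/ltW/(lt_le_trans (y_min (phi n)).2).
by rewrite lerD2l harmonic_subseq_le.
Qed.

Lemma closed_set_expect_sublevel (Y : set (Omega -> R)) c (V : R) :
  (forall p, Y p -> is_dist p) -> closed_set Y ->
  closed_set [set p | Y p /\ expect c p <= V].
Proof.
move=> Y_dist Y_closed s p Y_s s_p; have Y_p := Y_closed s p (fun n => (Y_s n).1) s_p.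
split=> //; apply: (cvg_le_harmonic (K := 0)).
  apply: lipschitz_cvg (expect_lipschitz c) _ (Y_dist _ Y_p) s_p => n.
  exact: Y_dist (Y_s n).1.
by move=> n; rewrite mul0r addr0; apply: (Y_s n).2.
Qed.

Lemma convex_set_expect_sublevel (Y : set (Omega -> R)) c (V : R) :
  convex_set Y -> convex_set [set p | Y p /\ expect c p <= V].
Proof.
move=> Y_convex p q t [Y_p p_le] [Y_q q_le] /andP[t0 t1]; split.
  by apply: Y_convex => //; rewrite t0.
have := ler_wpM2l t0 p_le; have : 0 <= 1 - t by rewrite subr_ge0.
move=> /ler_wpM2l/(_ _ _ q_le); rewrite expect_conv; nra.
Qed.

Lemma expect_perturbed_min_limit (Y : set (Omega -> R)) cL cG (V : R) :
  (forall p, Y p -> is_dist p) -> closed_set Y ->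
  (forall p, Y p -> V <= expect cL p) ->
  (forall n, exists p,
     Y p /\ expect cL p + harmonic n * expect cG p <= V + harmonic n ^+ 2) ->
  exists2 p, Y p & expect cL p <= V /\ expect cG p <= 0.
Proof.
move=> Y_dist Y_closed V_le /choice[ps ps_Y].
set M : R := \sum_w `|cG w|.
have ps_bounds n :
    expect cG (ps n) <= harmonic n /\ expect cL (ps n) <= V + (1 + M) * harmonic n.
  have [Y_ps ps_le] := ps_Y n; have := V_le _ Y_ps.
  have := expect_dist_norm cG (Y_dist _ Y_ps); rewrite -/M => /ler_normlP[G_ge _].
  move: ps_le G_ge (harmonic_gt0 n : 0 < harmonic n :> R) (harmonic_le1 n); rewrite expr2.
  set h := harmonic n; set G := expect cG _; set L := expect cL _.
  by move=> *; split; nra.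
have [phi phi_inc [p Y_p ps_p]] := closed_dist_subseq Y_dist Y_closed (fun n => (ps_Y n).1).
have ps_dist n : is_dist (ps (phi n)) by apply: Y_dist (ps_Y _).1.
exists p => //; split.
- apply: (cvg_le_harmonic (K := 1 + M)).
    exact: lipschitz_cvg (expect_lipschitz cL) ps_dist (Y_dist _ Y_p) ps_p.
  move=> n; apply: le_trans (ps_bounds (phi n)).2 _; rewrite lerD2l ler_wpM2l //.
    by rewrite addr_ge0 // sumr_ge0.
  exact: harmonic_subseq_le.
- apply: (cvg_le_harmonic (K := 1)).
    exact: lipschitz_cvg (expect_lipschitz cG) ps_dist (Y_dist _ Y_p) ps_p.
  move=> n; rewrite mul1r add0r; apply: le_trans (ps_bounds (phi n)).1 _.
  exact: harmonic_subseq_le.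
Qed.

End Distributions.

Section PositivePart.
Variable R : realDomainType.
Implicit Types x y : R.

Definition pos_part x := Num.max x 0.

Lemma pos_partE x : pos_part x = if 0 <= x then x else 0.
Proof.
rewrite /pos_part; case: ifPn => x0; first by rewrite (max_idPl x0).
by rewrite (max_idPr (ltW _)) // ltNge.
Qed.

Lemma pos_part_ge0 x : 0 <= pos_part x.
Proof. by rewrite pos_partE; case: ifP. Qed.

Lemma pos_part_le_norm x : pos_part x <= `|x|.
Proof. by rewrite pos_partE; case: ifP => [/ger0_norm ->|_]. Qed.

Lemma pos_partM x : pos_part x * x = pos_part x ^+ 2.
Proof. by rewrite pos_partE expr2; case: ifP => _; rewrite ?mul0r. Qed.

Lemma pos_part_dist x y : `|pos_part x - pos_part y| <= `|x - y|.
Proof.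
have := ler_norm (x - y); rewrite -normrN; have := ler_norm (- (x - y)).
rewrite normrN !pos_partE ler_norml.
by case: ifPn => [|/negbTE]; case: ifPn => [|/negbTE]; rewrite -?ltNge; lra.
Qed.

Lemma pos_part_sqr_dist x y M D : `|x| <= M -> `|y| <= M -> `|x - y| <= D ->
  `|pos_part x ^+ 2 - pos_part y ^+ 2| <= 2 * M * D.
Proof.
move=> x_le y_le xy_le; rewrite subr_sqr normrM [2 * M * D]mulrC ler_pM //.
  exact: le_trans (pos_part_dist x y) xy_le.
rewrite ger0_norm ?addr_ge0 ?pos_part_ge0 // mulr2n mulrDl mul1r.
by apply: lerD; apply: le_trans (pos_part_le_norm _) _.
Qed.

Lemma pos_part_sqrD_le x y : pos_part (x + y) ^+ 2 <= (pos_part x + y) ^+ 2.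
Proof.
rewrite !pos_partE; case: ifP => xy0; case: ifPn => x0; rewrite ?expr0n ?sqr_ge0 //=.
rewrite add0r ler_sqr ?nnegrE //; rewrite -ltNge in x0; lra.
Qed.

End PositivePart.

Lemma ge0_affine_right (R : realFieldType) (a b : R) :
  (forall t, 0 < t <= 1 -> 0 <= a + t * b) -> 0 <= a.
Proof.
move=> ab_ge0; rewrite leNgt; apply/negP => a_lt0.
have d_gt0 : 0 < `|b| + 1 - a by have := normr_ge0 b; lra.
pose t := - a / (`|b| + 1 - a).
have t_gt0 : 0 < t by rewrite divr_gt0 // oppr_gt0.
have t_le1 : t <= 1 by rewrite ler_pdivrMr // mul1r; have := normr_ge0 b; lra.
have td : t * (`|b| + 1 - a) = - a by rewrite divfK ?gt_eqF.
have tb : t * b <= t * `|b| by rewrite ler_wpM2l ?(ltW t_gt0) ?ler_norm.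
have := ab_ge0 t; rewrite t_gt0 t_le1 => /(_ isT); nra.
Qed.

Section LinearAlternative.
Variables (R : realType) (Omega K : finType) (F : K -> Omega -> R).
Variable Q : set (Omega -> R).
Hypotheses (Q_nonempty : Q !=set0) (Q_dist : forall p, Q p -> is_dist p).
Hypotheses (Q_closed : closed_set Q) (Q_convex : convex_set Q).

(* Squared distance from the vector of the [expect (F k) p] to the nonpositive
   orthant. *)
Definition excess (p : Omega -> R) : R := \sum_k pos_part (expect (F k) p) ^+ 2.

Lemma excess_lipschitz :
  lipschitz_dist excess (\sum_k 2 * (\sum_w `|F k w|) * (\sum_w `|F k w|)).
Proof.
move=> p q e dp dq pq_e; rewrite /excess -sumrB mulr_suml.
apply: le_trans (ler_norm_sum _ _ _) _; apply: ler_sum => k _.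
rewrite -[_ * _ * e]mulrA pos_part_sqr_dist ?expect_dist_norm //.
exact: expect_lipschitz.
Qed.

Lemma excess_min_variational q0 : Q q0 -> (forall q, Q q -> excess q0 <= excess q) ->
  forall q, Q q -> excess q0 <= \sum_k pos_part (expect (F k) q0) * expect (F k) q.
Proof.
move=> Q_q0 q0_min q Q_q; set lam := fun k => pos_part (expect (F k) q0).
pose d k := expect (F k) q - expect (F k) q0.
(* Twice this sum is the one-sided derivative of excess at q0 towards q. *)
have slope_ge0 : 0 <= \sum_k lam k * d k.
  rewrite -(pmulr_rge0 _ (ltr0n R 2)); apply: (@ge0_affine_right _ _ (\sum_k d k ^+ 2)).
  move=> t /andP[t_gt0 t_le1].
  have Q_qt := Q_convex Q_q Q_q0 (introT andP (conj (ltW t_gt0) t_le1)).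
  have qt_le : excess (fun w => t * q w + (1 - t) * q0 w) <= \sum_k (lam k + t * d k) ^+ 2.
    apply: ler_sum => k _; rewrite expect_conv.
    have -> : t * expect (F k) q + (1 - t) * expect (F k) q0 = expect (F k) q0 + t * d k.
      by rewrite /d; ring.
    exact: pos_part_sqrD_le.
  have expand : \sum_k (lam k + t * d k) ^+ 2 =
      excess q0 + t * (2 * \sum_k lam k * d k + t * \sum_k d k ^+ 2).
    rewrite /excess mulrDr !mulr_sumr -!big_split /=.
    by apply: eq_bigr => k _; rewrite /lam; ring.
  by have := le_trans (q0_min _ Q_qt) qt_le; rewrite expand lerDl pmulr_rge0.
have -> : \sum_k lam k * expect (F k) q = excess q0 + \sum_k lam k * d k.
  rewrite /excess -big_split; apply: eq_bigr => k _ /=.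
  by rewrite /d /lam -pos_partM; ring.
by rewrite lerDl.
Qed.

Lemma expect_alternative :
  (exists2 q, Q q & forall k, expect (F k) q <= 0) \/
  exists mu c, [/\ forall k, 0 <= mu k, \sum_k mu k = 1, 0 < c &
    forall q, Q q -> c <= \sum_k mu k * expect (F k) q].
Proof.
have [q0 Q_q0 q0_min] := lipschitz_min_attained Q_nonempty Q_dist Q_closed excess_lipschitz.
have [q0_ok|] := pselect (forall k, expect (F k) q0 <= 0); first by left; exists q0.
move=> /existsNP[k0 /negP]; rewrite -ltNge => q0_k0; right.
set lam := fun k => pos_part (expect (F k) q0); set S := \sum_k lam k.
have lam_ge0 k : 0 <= lam k by apply: pos_part_ge0.
have lam_k0 : 0 < lam k0 by rewrite /lam pos_partE ltW.
have S_gt0 : 0 < S by rewrite (lt_le_trans lam_k0) // /S (bigD1 k0) //= lerDl sumr_ge0.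
have excess_gt0 : 0 < excess q0.
  rewrite (lt_le_trans (exprn_gt0 2 lam_k0)) // /excess (bigD1 k0) //= lerDl.
  by rewrite sumr_ge0 // => k _; apply: sqr_ge0.
exists (fun k => lam k / S), (excess q0 / S); split.
- by move=> k; rewrite divr_ge0 // ltW.
- by rewrite -mulr_suml divff // gt_eqF.
- exact: divr_gt0.
- move=> q Q_q; under eq_bigr do rewrite mulrAC; rewrite -mulr_suml ler_pM2r ?invr_gt0 //.
  exact: excess_min_variational.
Qed.

End LinearAlternative.

Section Strategies.
Variables (R : realType) (A : finType).

Lemma sum_obedient (m : A) (F : A -> R) : \sum_a obedient R m a * F a = F m.
Proof.
rewrite (bigD1 m) //= /obedient eqxx mul1r big1 ?addr0 // => a.
by rewrite eq_sym => /negbTE ->; rewrite mul0r.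
Qed.

Lemma obedient_strategy : is_strategy (@obedient R A).
Proof.
move=> m; split=> [a|]; first by rewrite /obedient; case: eqP.
by under eq_bigr do rewrite -[obedient _ _ _]mulr1; rewrite sum_obedient.
Qed.

Definition perturbed_obedient (mu : A -> A -> R) (eps : R) (m a : A) : R :=
  obedient R m a + eps * (mu m a - obedient R m a * \sum_b mu m b).

Lemma sum_perturbed_obedient mu eps m : \sum_a perturbed_obedient mu eps m a = 1.
Proof.
rewrite big_split /= (obedient_strategy m).2 -mulr_sumr sumrB sum_obedient.
by rewrite subrr mulr0 addr0.
Qed.

Lemma perturbed_obedient_strategy mu eps :
  (forall m a, 0 <= mu m a) -> (forall m, \sum_a mu m a <= 1) -> 0 <= eps <= 1 ->
  is_strategy (perturbed_obedient mu eps).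
Proof.
move=> mu_ge0 mu_row /andP[eps_ge0 eps_le1] m.
split=> [a|]; last exact: sum_perturbed_obedient.
rewrite /perturbed_obedient /obedient; case: eqP => [<-|_]; last first.
  by rewrite mul0r subr0 add0r mulr_ge0.
have := ler_wpM2l eps_ge0 (mu_row m); have := mulr_ge0 eps_ge0 (mu_ge0 m m).
by rewrite mul1r; nra.
Qed.

End Strategies.

Section Receiver.
Variables (R : realType) (Omega A : finType).
Variables (u : A -> Omega -> R) (sigma : Omega -> A -> R) (P : set (Omega -> R)).
Hypotheses (P_nonempty : P !=set0) (P_dist : forall p, P p -> is_dist p).
Implicit Types (p q : Omega -> R) (tau : A -> A -> R).

Definition payoff_coef tau (w : Omega) : R :=
  \sum_m \sum_a sigma w m * tau m a * u a w.

Lemma ur_p_expect p tau : ur_p u p sigma tau = expect (payoff_coef tau) p.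
Proof.
rewrite /ur_p /expect /payoff_coef; apply: eq_bigr => w _; rewrite mulr_sumr.
by apply: eq_bigr => m _; rewrite mulr_sumr; apply: eq_bigr => a _; ring.
Qed.

Definition deviation_gain (m a : A) (w : Omega) : R := sigma w m * (u a w - u m w).

Lemma expect_deviation_gain p a b :
  expect (deviation_gain a b) p = \sum_w p w * sigma w a * (u b w - u a w).
Proof. by apply: eq_bigr => w _; rewrite mulrA. Qed.

Lemma ur_p_deviation p tau : (forall m, \sum_a tau m a = 1) ->
  ur_p u p sigma tau =
  ur_p u p sigma (@obedient R A) + \sum_m \sum_a tau m a * expect (deviation_gain m a) p.
Proof.
move=> tau_sum1; under [X in _ + X]eq_bigr do under eq_bigr do rewrite expectZ.
under [X in _ + X]eq_bigr do rewrite expect_sum.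
rewrite expect_sum !ur_p_expect expectD; congr expect; apply/funext => w.
rewrite /payoff_coef -big_split; apply: eq_bigr => m _ /=.
under [X in _ = X + _]eq_bigr do rewrite mulrAC mulrC.
rewrite sum_obedient -[X in X + _]mulr1 -(tau_sum1 m) mulr_sumr -big_split.
by apply: eq_bigr => a _ /=; rewrite /deviation_gain; ring.
Qed.

Lemma ur_p_perturbed_obedient p mu eps :
  ur_p u p sigma (perturbed_obedient mu eps) =
  ur_p u p sigma (@obedient R A) +
  eps * \sum_m \sum_a mu m a * expect (deviation_gain m a) p.
Proof.
rewrite ur_p_deviation; last exact: sum_perturbed_obedient.
rewrite mulr_sumr; congr (_ + _); apply: eq_bigr => m _.
rewrite mulr_sumr; apply: eq_bigr => a _.
rewrite /perturbed_obedient /obedient; case: eqP => [<-|_].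
  have -> : expect (deviation_gain m m) p = 0.
    by rewrite /expect big1 // => w _; rewrite /deviation_gain subrr !mulr0.
  by rewrite !mulr0.
by rewrite mul0r subr0 add0r mulrA.
Qed.

Lemma ur_has_inf tau : has_inf [set ur_p u p sigma tau | p in P].
Proof.
have [p0 P_p0] := P_nonempty; split; first by exists (ur_p u p0 sigma tau), p0.
exists (- \sum_w `|payoff_coef tau w|) => _ [p P_p <-]; rewrite ur_p_expect.
exact/lerNnormlW/expect_dist_norm/P_dist.
Qed.

Lemma ur_le_ur_p tau p : P p -> ur u P sigma tau <= ur_p u p sigma tau.
Proof. by move=> P_p; apply: (ge_inf (ur_has_inf tau).2); exists p. Qed.

Lemma ur_ge tau x : (forall p, P p -> x <= ur_p u p sigma tau) -> x <= ur u P sigma tau.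
Proof.
move=> x_le; apply: lb_le_inf (ur_has_inf tau).1 _.
by move=> _ [p P_p <-]; apply: x_le.
Qed.

Lemma ur_adherent tau eps : 0 < eps ->
  exists p, P p /\ ur_p u p sigma tau < ur u P sigma tau + eps.
Proof.
by move=> eps_gt0; have [_ [p P_p <-] ?] := inf_adherent eps_gt0 (ur_has_inf tau); exists p.
Qed.

Lemma obedient_BR_of_obedient_prior p :
  Pstar u P sigma p -> (forall a b, \sum_w p w * sigma w a * (u b w - u a w) <= 0) ->
  in_BR u P sigma (@obedient R A).
Proof.
move=> [P_p p_min] p_obedient; split=> [|tau tau_strategy]; first exact: obedient_strategy.
apply: le_trans (ur_le_ur_p tau P_p) _.
apply: (@le_trans _ _ (ur_p u p sigma (@obedient R A))); last exact: ur_ge.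
rewrite (ur_p_deviation _ (fun m => (tau_strategy m).2)) gerDl.
apply: sumr_le0 => m _; apply: sumr_le0 => a _.
by rewrite mulr_ge0_le0 ?(tau_strategy m).1 // expect_deviation_gain.
Qed.

Lemma obedient_BR_perturbed_near_min mu eps :
  in_BR u P sigma (@obedient R A) ->
  (forall m a, 0 <= mu m a) -> (forall m, \sum_a mu m a <= 1) -> 0 < eps <= 1 ->
  exists p, P p /\ ur_p u p sigma (@obedient R A) +
    eps * \sum_m \sum_a mu m a * expect (deviation_gain m a) p
    <= ur u P sigma (@obedient R A) + eps ^+ 2.
Proof.
move=> [_ ob_best] mu_ge0 mu_row /andP[eps_gt0 eps_le1].
have [p [P_p p_lt]] := ur_adherent (perturbed_obedient mu eps) (exprn_gt0 2 eps_gt0).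
exists p; split=> //; rewrite -ur_p_perturbed_obedient; apply/ltW/(lt_le_trans p_lt).
by rewrite lerD2r ob_best //; apply: perturbed_obedient_strategy; rewrite // ltW.
Qed.

Lemma obedient_prior_of_obedient_BR : closed_set P -> convex_set P ->
  in_BR u P sigma (@obedient R A) ->
  exists p, Pstar u P sigma p /\
    forall a b, \sum_w p w * sigma w a * (u b w - u a w) <= 0.
Proof.
move=> P_closed P_convex ob_BR; set L := payoff_coef (@obedient R A).
have [p0 P_p0 p0_min] :=
  lipschitz_min_attained P_nonempty P_dist P_closed (expect_lipschitz L).
set V := expect L p0; pose Q := [set p | P p /\ expect L p <= V].
have ur_ob : ur u P sigma (@obedient R A) = V.
  apply/le_anti; rewrite /V -ur_p_expect ur_le_ur_p //=.
  by apply: ur_ge => q P_q; rewrite !ur_p_expect p0_min.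
have Q_Pstar p : Q p -> Pstar u P sigma p.
  by move=> [P_p p_le]; split=> // q P_q; rewrite !ur_p_expect (le_trans p_le) ?p0_min.
have Q_nonempty : Q !=set0 by exists p0.
have Q_dist p : Q p -> is_dist p by move=> [/P_dist].
have [[q Q_q q_obedient]|[mu [c [mu_ge0 mu_sum1 c_gt0 c_le]]]] :=
  expect_alternative (fun k : A * A => deviation_gain k.1 k.2) Q_nonempty Q_dist
    (closed_set_expect_sublevel (c := L) (V := V) P_dist P_closed)
    (convex_set_expect_sublevel (c := L) (V := V) P_convex).
  exists q; split=> [|a b]; first exact: Q_Pstar.
  by rewrite -expect_deviation_gain (q_obedient (a, b)).
pose G w := \sum_m \sum_a mu (m, a) * deviation_gain m a w.
have G_eq p : \sum_m \sum_a mu (m, a) * expect (deviation_gain m a) p = expect G p.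
  under eq_bigr do under eq_bigr do rewrite expectZ.
  by under eq_bigr do rewrite expect_sum; rewrite expect_sum.
have sum_pair (F : A * A -> R) : \sum_k F k = \sum_m \sum_a F (m, a).
  by rewrite pair_bigA; apply: eq_bigr => -[].
have mu_row m : \sum_a mu (m, a) <= 1.
  rewrite -mu_sum1 sum_pair [leRHS](bigD1 m) //= lerDl.
  by rewrite sumr_ge0 // => ? _; rewrite sumr_ge0.
have near_min n :
    exists p, P p /\ expect L p + harmonic n * expect G p <= V + harmonic n ^+ 2.
  have [|p [P_p p_le]] := obedient_BR_perturbed_near_min (eps := harmonic n) ob_BR
    (fun m a => mu_ge0 (m, a)) mu_row.
    by rewrite harmonic_gt0 harmonic_le1.
  by exists p; rewrite -G_eq -ur_p_expect -ur_ob.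
have [p P_p [p_le G_le]] := expect_perturbed_min_limit P_dist P_closed p0_min near_min.
have := c_le p (conj P_p p_le); rewrite sum_pair G_eq; lra.
Qed.

End Receiver.

Theorem mainTheorem5 (R : realType) (Omega A : finType)
  (u : A -> Omega -> R) (P : set (Omega -> R))
  (HPne : P !=set0) (HPsub : priors_subset P) (HPcl : closed_set P)
  (HPcv : convex_set P)
  (sigma : Omega -> A -> R) (Hsigma : is_experiment sigma) :
  in_BR u P sigma (@obedient R A) <->
  exists p, Pstar u P sigma p /\
    forall a b : A,
      \sum_(w : Omega) p w * sigma w a * (u b w - u a w) <= 0.
Proof.
split; first exact: obedient_prior_of_obedient_BR.
by move=> [p [p_Pstar p_obedient]]; apply: obedient_BR_of_obedient_prior p_Pstar p_obedient.
Qed.
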